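(* The Lebesgue measure $\mu$ of the set $\{xy : x,y\in C\}$ satisfies $\mu(\{xy : x,y\in C\}) \ge \tfrac{17}{21}$.
   Context: $C=\{\sum_{k\ge1}\alpha_k3^{-k}:\alpha_k\in\{0,2\}\}$ is the middle-thirds Cantor set. *)

From HB Require Import structures.
From mathcomp Require Import all_boot all_order all_algebra.
From mathcomp Require Import all_classical all_reals all_analysis.
Set Implicit Arguments. Unset Strict Implicit. Unset Printing Implicit Defensive.
Import Order.TTheory GRing.Theory Num.Theory numFieldNormedType.Exports.
Local Open Scope classical_set_scope.
Local Open Scope ring_scope.

(* Middle-thirds Cantor set: { sum_{k>=1} alpha_k 3^{-k} : alpha_k in {0,2} }.
   The digit sequence is alpha : nat -> bool, with alpha k (k >= 0) encoding
   the digit alpha_{k+1} = 2 (if true) or 0 (if false); x is the sum of the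
   series, i.e. the limit of its partial sums. *)
Definition cantor_digit_sum (R : realType) (alpha : nat -> bool) : nat -> R :=
  fun n => \sum_(0 <= k < n) ((alpha k)%:R * 2) / 3 ^+ k.+1.

Definition middle_third_cantor (R : realType) : set R :=
  [set c : R | exists alpha : nat -> bool, @cantor_digit_sum R alpha n @[n --> \oo] --> c].

Definition cantor_product_set (R : realType) : set R :=
  [set z | exists x y, @middle_third_cantor R x /\ @middle_third_cantor R y /\ z = x * y].

From HB Require Import structures.
From mathcomp Require Import all_boot all_order all_algebra.
From mathcomp Require Import all_classical all_reals all_analysis.
From mathcomp Require Import ring lra measurable_realfun.
Import Order.TTheory GRing.Theory Num.Theory numFieldNormedType.Exports.
Local Open Scope classical_set_scope.
Local Open Scope ring_scope.
Set Implicit Arguments. Unset Strict Implicit. Unset Printing Implicit Defensive.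

(* C*C is the continuous image of the compact space of pairs of digit
   sequences, hence compact and measurable.  For the measure, a greedy choice
   of ternary digits shows that every w in [[ab, (a+1)(b+1)]] is a product
   (a + x)(b + y) with x, y in C as soon as a + 1 <= b <= 3a - 1.  Applied to
   the off-diagonal sub-squares of a square of level intervals
   [[p, p+1]/3^k1 x [p, p+1]/3^k2], this covers [[p^2, (p+1)^2]/3^(k1+k2)]
   except for one gap of relative length 1/9 and the two diagonal
   sub-squares, on which one recurses.  Along [[0, 1]] the uncovered part then
   has measure at most 3/2 (1/9 + 1/63) = 4/21, up to terms that vanish with
   the recursion depth. *)

Lemma exists_expr_lt (R : realType) (q e : R) :
  0 <= q < 1 -> 0 < e -> exists n, q ^+ n < e.
Proof.
move=> /andP[q0 q1] e0; have nq1 : `|q| < 1 by rewrite ger0_norm.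
have /cvgrPdist_lt/(_ e e0)[N _ hN] := cvg_expr nq1.
by exists N; have := hN N (leqnn N); rewrite sub0r normrN ger0_norm // exprn_ge0.
Qed.

Section CantorPoint.
Variable R : realType.
Implicit Types (a : nat -> bool) (n m : nat).

Local Notation S := (cantor_digit_sum R).

Lemma cantor_digit_sum0 a : S a 0 = 0.
Proof. by rewrite /cantor_digit_sum big_geq. Qed.

Lemma cantor_digit_sumS a n : S a n.+1 = S a n + (a n)%:R * 2 / 3 ^+ n.+1.
Proof. by rewrite /cantor_digit_sum big_nat_recr. Qed.

Lemma nondecreasing_cantor_digit_sum a : {homo S a : n m / (n <= m)%N >-> n <= m}.
Proof.
apply/nondecreasing_seqP => n; rewrite cantor_digit_sumS lerDl.
by case: (a n); rewrite ?mul0r // mul1r divr_ge0 // exprn_ge0.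
Qed.

(* A digit [2] at place [n.+1] contributes exactly the [3^-(n+1)] that the
   remaining tail could still add, so [S a n + 3^-n] is nonincreasing. *)
Lemma cantor_digit_sum_tail a n m : (n <= m)%N ->
  S a m + (3 ^+ m)^-1 <= S a n + (3 ^+ n)^-1.
Proof.
elim: m => [|m IH]; first by rewrite leqn0 => /eqP ->.
rewrite leq_eqVlt => /orP[/eqP -> //|/IH]; apply: le_trans.
have e0 : (0 : R) < (3 ^+ m)^-1 by rewrite invr_gt0 exprn_gt0.
rewrite cantor_digit_sumS -addrA lerD2l exprS invfM.
by case: (a m) => /=; rewrite ?mul0r ?mul1r; lra.
Qed.

Lemma cantor_digit_sum_le a n m : S a m <= S a n + (3 ^+ n)^-1.
Proof.
have e0 k : (0 : R) <= (3 ^+ k)^-1 by rewrite invr_ge0 exprn_ge0.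
case: (leqP n m) => [nm|/ltnW mn].
  by apply: le_trans (cantor_digit_sum_tail a nm); rewrite lerDl.
by apply: le_trans (nondecreasing_cantor_digit_sum a mn) _; rewrite lerDl.
Qed.

Lemma cvgn_cantor_digit_sum a : cvgn (S a).
Proof.
apply: nondecreasing_is_cvgn; first exact: nondecreasing_cantor_digit_sum.
exists 1 => _ [m _ <-].
by have := cantor_digit_sum_le a 0 m; rewrite cantor_digit_sum0 expr0 invr1 add0r.
Qed.

Definition cantor_point a : R := limn (S a).

Lemma cantor_digit_sum_le_point a n : S a n <= cantor_point a.
Proof.
apply: nondecreasing_cvgn_le; first exact: nondecreasing_cantor_digit_sum.
exact: cvgn_cantor_digit_sum.
Qed.

Lemma cantor_point_le a n : cantor_point a <= S a n + (3 ^+ n)^-1.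
Proof.
apply: limr_le; first exact: cvgn_cantor_digit_sum.
by apply: nearW => m; exact: cantor_digit_sum_le.
Qed.

Lemma cantor_pointP x : middle_third_cantor x <-> exists a, x = cantor_point a.
Proof.
split=> [[a ha]|[a ->]]; last by exists a; exact: cvgn_cantor_digit_sum.
by exists a; rewrite /cantor_point (cvg_lim _ ha).
Qed.

Lemma middle_third_cantor_point a : middle_third_cantor (cantor_point a).
Proof. by apply/cantor_pointP; exists a. Qed.

Definition cons_digit (b : bool) a : nat -> bool :=
  fun n => if n is k.+1 then a k else b.

Lemma cantor_digit_sum_cons b a n :
  S (cons_digit b a) n.+1 = (b%:R * 2 + S a n) / 3.
Proof.
elim: n => [|n IH]; first by rewrite cantor_digit_sumS !cantor_digit_sum0 add0r addr0.
have h3 : (3 ^+ n.+1 : R) != 0 by rewrite expf_neq0.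
by rewrite cantor_digit_sumS IH cantor_digit_sumS /= [3 ^+ n.+2]exprS; field.
Qed.

Lemma cantor_point_cons b a :
  cantor_point (cons_digit b a) = (b%:R * 2 + cantor_point a) / 3.
Proof.
apply: cvg_lim => //; rewrite -cvg_shiftS.
under eq_fun do rewrite /= cantor_digit_sum_cons.
by apply: cvgMl; apply: cvgD; [exact: cvg_cst|exact: cvgn_cantor_digit_sum].
Qed.

Lemma middle_third_cantor_digit (b : bool) c :
  middle_third_cantor c -> middle_third_cantor ((b%:R * 2 + c) / 3 : R).
Proof.
move=> /cantor_pointP[a ->]; rewrite -cantor_point_cons.
exact: middle_third_cantor_point.
Qed.

Lemma eq_cantor_digit_sum a a' n : (forall i, (i < n)%N -> a i = a' i) ->
  S a n = S a' n.
Proof. by move=> h; apply: eq_big_nat => i /andP[_ /h ->]. Qed.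

Lemma cantor_point_dist a a' n : (forall i, (i < n)%N -> a i = a' i) ->
  `|cantor_point a - cantor_point a'| <= (3 ^+ n)^-1.
Proof.
move=> /eq_cantor_digit_sum eqS; rewrite ler_norml.
have := cantor_digit_sum_le_point a n; have := cantor_point_le a n.
have := cantor_digit_sum_le_point a' n; have := cantor_point_le a' n.
rewrite eqS; lra.
Qed.

End CantorPoint.

Lemma near_prefix (a : cantor_space) n :
  \forall a' \near a, forall i, (i < n)%N -> a i = a' i.
Proof.
elim: n => [|n IH]; first by near=> a' => ?; rewrite ltn0.
near=> a' => i; rewrite ltnS leq_eqVlt => /orP[/eqP->|ltin]; last by rewrite (near IH a').
near: a'; exists (proj n @^-1` [set a n]); split => //.
suff : @open cantor_space (proj n @^-1` [set a n]) by [].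
by apply: open_comp; [move=> + _; exact: proj_continuous|exact: discrete_open].
Unshelve. all: end_near. Qed.

Lemma continuous_cantor_point (R : realType) :
  continuous (cantor_point R : cantor_space -> R).
Proof.
move=> a; apply/cvgrPdist_le => e e0.
have [n ne] : exists n, (3 ^-1) ^+ n < e by apply: exists_expr_lt; lra.
rewrite exprVn in ne.
near=> a'; apply: le_trans (ltW ne); apply: cantor_point_dist.
by near: a'; exact: near_prefix.
Unshelve. all: end_near. Qed.

Lemma cantor_product_setE (R : realType) : @cantor_product_set R =
  (fun p : cantor_space * cantor_space => cantor_point R p.1 * cantor_point R p.2) @` setT.
Proof.
apply/seteqP; split=> z.
  by case=> x [y [/cantor_pointP[a ->] [/cantor_pointP[b ->] ->]]]; exists (a, b).
case=> -[a b] _ <-; exists (cantor_point R a), (cantor_point R b).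
by do ![split] => //; exact: middle_third_cantor_point.
Qed.

Lemma measurable_cantor_product_set (R : realType) :
  measurable (@cantor_product_set R).
Proof.
apply: compact_measurable; rewrite cantor_product_setE.
apply: continuous_compact; last by rewrite -setXTT; apply: compact_setX; exact: cantor_space_compact.
apply: continuous_subspaceT => p; apply: cvgM.
  apply: (@continuous_comp _ _ _ fst (fun a : cantor_space => cantor_point R a)); first exact: cvg_fst.
  exact: continuous_cantor_point.
apply: (@continuous_comp _ _ _ snd (fun a : cantor_space => cantor_point R a)); first exact: cvg_snd.
exact: continuous_cantor_point.
Qed.

Section CantorCopy.
Variable R : realType.

(* [(u + C) / 3^k ⊆ C]: for an integer [u], the level-[k] interval
   [[u / 3^k, (u + 1) / 3^k]] of the construction of [C]. *)
Definition cantor_copy (k : nat) (u : R) : Prop :=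
  forall c, middle_third_cantor c -> middle_third_cantor ((u + c) / 3 ^+ k).

Lemma cantor_copy_mul3 k u : cantor_copy k u -> cantor_copy k.+1 (3 * u).
Proof.
move=> h c /(middle_third_cantor_digit false) /h; rewrite mul0r add0r.
have h3 : (3 ^+ k : R) != 0 by rewrite expf_neq0.
by congr middle_third_cantor; rewrite exprS; field.
Qed.

Lemma cantor_copy_mul3D2 k u : cantor_copy k u -> cantor_copy k.+1 (3 * u + 2).
Proof.
move=> h c /(middle_third_cantor_digit true) /h; rewrite mul1r.
have h3 : (3 ^+ k : R) != 0 by rewrite expf_neq0.
by congr middle_third_cantor; rewrite exprS; field.
Qed.

Lemma cantor_copy0 k : cantor_copy k 0.
Proof.
elim: k => [c|k /cantor_copy_mul3]; last by rewrite mulr0.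
by rewrite add0r expr0 divr1.
Qed.

Lemma cantor_copy2 k : cantor_copy k.+1 2.
Proof. by have := cantor_copy_mul3D2 (cantor_copy0 k); rewrite mulr0 add0r. Qed.

End CantorCopy.

Section GreedyDigits.
Variable R : realType.
Implicit Types (a b w : R) (s : R * R * R).

Local Notation S := (cantor_digit_sum R).

(* A state [(a, b, w)] with [w] in the box [[ab, (a+1)(b+1)]]; the bound
   [b <= 3a - 1] makes the four boxes of the next digit pairs overlap, so
   they cover the box [[9ab, 9(a+1)(b+1)]] of [(3a, 3b, 9w)]. *)
Definition product_window s : Prop :=
  let: (a, b, w) := s in
  [/\ 1 <= a, a + 1 <= b, b <= 3 * a - 1, a * b <= w & w <= (a + 1) * (b + 1)].

Definition greedy_digits s : bool * bool :=
  let: (a, b, w) := s in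
  if 9 * w <= (3 * a + 1) * (3 * b + 1) then (false, false)
  else if 9 * w <= (3 * a + 1) * (3 * b + 3) then (false, true)
  else if 9 * w <= (3 * a + 3) * (3 * b + 1) then (true, false)
  else (true, true).

Definition greedy_step s : R * R * R :=
  let d := greedy_digits s in
  (3 * s.1.1 + d.1%:R * 2, 3 * s.1.2 + d.2%:R * 2, 9 * s.2).

Definition greedy_digit1 s n : bool := (greedy_digits (iter n greedy_step s)).1.
Definition greedy_digit2 s n : bool := (greedy_digits (iter n greedy_step s)).2.

Lemma product_window_step s : product_window s -> product_window (greedy_step s).
Proof.
case: s => [[a b] w] [h1 h2 h3 h4 h5]; rewrite /greedy_step /=.
by case: ifP => c1; [|case: ifP => c2; [|case: ifP => c3]];
  rewrite /= ?mul0r ?mul1r ?addr0; split; nra.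
Qed.

Lemma iter_greedy_step s n : iter n greedy_step s =
  (3 ^+ n * (s.1.1 + S (greedy_digit1 s) n),
   3 ^+ n * (s.1.2 + S (greedy_digit2 s) n), 9 ^+ n * s.2).
Proof.
elim: n => [|n IH]; first by case: s => [[a b] w]; rewrite /= !cantor_digit_sum0 !addr0 !mul1r.
rewrite iterS {1}/greedy_step -/(greedy_digit1 s n) -/(greedy_digit2 s n) IH /=.
have h3 : (3 ^+ n : R) != 0 by rewrite expf_neq0.
by rewrite !cantor_digit_sumS !exprS; congr (_, _, _); field.
Qed.

Lemma product_window_partial_sums s n : product_window s ->
  (s.1.1 + S (greedy_digit1 s) n) * (s.1.2 + S (greedy_digit2 s) n) <= s.2 <=
  (s.1.1 + S (greedy_digit1 s) n + (3 ^+ n)^-1) *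
  (s.1.2 + S (greedy_digit2 s) n + (3 ^+ n)^-1).
Proof.
move=> win; have : product_window (iter n greedy_step s).
  by elim: n => //= n IH; exact: product_window_step.
rewrite iter_greedy_step; case: s {win} => [[a b] w] /=.
set u := a + _; set v := b + _; case=> _ _ _.
set E := (3 ^+ n : R); have E0 : 0 < E by rewrite exprn_gt0.
have E00 := mulr_gt0 E0 E0.
have -> : (9 : R) ^+ n = E * E by rewrite -exprMn; congr (_ ^+ _); lra.
move=> lo hi; rewrite -(ler_pM2l E00 (u * v)) -(ler_pM2l E00 w).
have -> : E * E * (u * v) = E * u * (E * v) by ring.
have -> : E * E * ((u + E^-1) * (v + E^-1)) = (E * u + 1) * (E * v + 1).
  by field; rewrite gt_eqF.
by rewrite lo hi.
Qed.

Lemma product_window_cantor_product a b w : product_window (a, b, w) ->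
  exists x y, middle_third_cantor x /\ middle_third_cantor y /\ w = (a + x) * (b + y).
Proof.
move=> win; have /= bounds n := product_window_partial_sums n win.
set a1 := greedy_digit1 _ in bounds; set a2 := greedy_digit2 _ in bounds.
exists (cantor_point R a1), (cantor_point R a2).
do 2 (split; first exact: middle_third_cantor_point).
have cvg1 : cvgn (S a1) by exact: cvgn_cantor_digit_sum.
have cvg2 : cvgn (S a2) by exact: cvgn_cantor_digit_sum.
have cvg_e : (3 ^+ n)^-1 @[n --> \oo] --> (0 : R).
  under eq_fun do rewrite -exprVn.
  by apply: cvg_expr; rewrite ger0_norm ?invr_ge0 // invf_lt1 // ltr1n.
set x := cantor_point R a1; set y := cantor_point R a2.
have lo : (a + S a1 n) * (b + S a2 n) @[n --> \oo] --> (a + x) * (b + y).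
  by apply: cvgM; apply: cvgD => //; exact: cvg_cst.
have hi : (a + S a1 n + (3 ^+ n)^-1) * (b + S a2 n + (3 ^+ n)^-1) @[n --> \oo] -->
    (a + x + 0) * (b + y + 0).
  by apply: cvgM; do 2 apply: cvgD => //; exact: cvg_cst.
rewrite !addr0 in hi.
have : w @[_ --> \oo] --> (a + x) * (b + y).
  by apply: (squeeze_cvgr _ lo hi); exact: nearW.
by move/(cvg_lim (@Rhausdorff R)); rewrite lim_cst.
Qed.

End GreedyDigits.

Section Covering.
Variable R : realType.
Implicit Types (m k j K N : nat) (p u v z : R).

Definition triadic_itv m u v : set R := [set` `[u / 3 ^+ m, v / 3 ^+ m]].

Lemma triadic_itvP m u v z : triadic_itv m u v z <-> u <= z * 3 ^+ m <= v.
Proof. by rewrite /triadic_itv /= in_itv /= ler_pdivrMr ?ler_pdivlMr ?exprn_gt0. Qed.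

Lemma measurable_triadic_itv m u v : measurable (triadic_itv m u v).
Proof. exact: measurable_itv. Qed.

Lemma lebesgue_triadic_itv m u v : u <= v ->
  lebesgue_measure (triadic_itv m u v) = ((v - u) / 3 ^+ m)%:E.
Proof.
move=> uv; rewrite lebesgue_measure_itv /= lte_fin.
have e0 : (0 : R) < (3 ^+ m)^-1 by rewrite invr_gt0 exprn_gt0.
case: ltP => [_|]; first by rewrite -EFinD -mulrBl.
rewrite ler_pM2r // => vu; suff -> : v = u by rewrite subrr mul0r.
by apply/eqP; rewrite eq_le uv vu.
Qed.

Lemma lebesgue_triadic_itv_le m u v : u <= v ->
  (lebesgue_measure (triadic_itv m u v) <= ((v - u) / 3 ^+ m)%:E)%E.
Proof. by move=> uv; rewrite lebesgue_triadic_itv. Qed.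

Lemma div_expr3S m u : u / 3 ^+ m.+1 = u / 3 / 3 ^+ m.
Proof. by rewrite exprS invfM mulrA. Qed.

Lemma cantor_product_window k1 k2 p z :
  cantor_copy k1 p -> cantor_copy k2 p -> 1 <= p ->
  triadic_itv (k1 + k2).+2 (3 * p * (3 * p + 2)) ((3 * p + 1) * (3 * p + 3)) z ->
  @cantor_product_set R z.
Proof.
move=> P1 P2 p1 /triadic_itvP; set w := z * _ => /andP[lo hi].
have [|x [y [Cx [Cy wxy]]]] := @product_window_cantor_product R (3 * p) (3 * p + 2) w.
  by split; nra.
exists ((3 * p + x) / 3 ^+ k1.+1), ((3 * p + 2 + y) / 3 ^+ k2.+1).
split; first exact: cantor_copy_mul3 P1 _ Cx.
split; first exact: cantor_copy_mul3D2 P2 _ Cy.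
have h1 : (3 ^+ k1 : R) != 0 by rewrite expf_neq0.
have h2 : (3 ^+ k2 : R) != 0 by rewrite expf_neq0.
have -> : z = w / 3 ^+ (k1 + k2).+2 by rewrite /w mulfK // expf_neq0.
by rewrite wxy !exprS exprD; field; rewrite h1 h2.
Qed.

Definition diag_image m p := triadic_itv m (p ^+ 2) ((p + 1) ^+ 2).

Definition diag_gap m p :=
  triadic_itv m.+2 ((3 * p + 1) * (3 * p + 3)) ((3 * p + 2) ^+ 2).

Fixpoint diag_uncovered K m p : set R :=
  if K is K'.+1 then
    diag_gap m p `|` diag_uncovered K' m.+2 (3 * p) `|` diag_uncovered K' m.+2 (3 * p + 2)
  else diag_image m p.

(* At scale [3^-(m+2)], [[p^2, (p+1)^2]] splits at
   [(3p)^2 <= (3p+1)^2 <= (3p+1)(3p+3) <= (3p+2)^2 <= (3p+3)^2]: the first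
   and last pieces are images of the diagonal sub-squares (recursion), the
   off-diagonal window of [cantor_product_window] covers the second one, and
   only [diag_gap] is lost. *)
Lemma diag_image_cover K k1 k2 p z :
  cantor_copy k1 p -> cantor_copy k2 p -> 1 <= p -> diag_image (k1 + k2) p z ->
  @cantor_product_set R z \/ diag_uncovered K (k1 + k2) p z.
Proof.
elim: K k1 k2 p => [|K IH] k1 k2 p P1 P2 p1 hz; first by right.
have e2 : (k1.+1 + k2.+1 = (k1 + k2).+2)%N by rewrite addSn addnS.
move/triadic_itvP: hz; set t := z * 3 ^+ (k1 + k2).+2.
have -> : z * 3 ^+ (k1 + k2) = t / 9 by rewrite /t !exprS; field.
move=> /andP[lo hi].
have IHsq q : cantor_copy k1.+1 q -> cantor_copy k2.+1 q -> 1 <= q ->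
    q ^+ 2 <= t <= (q + 1) ^+ 2 ->
    @cantor_product_set R z \/ diag_uncovered K (k1 + k2).+2 q z.
  by move=> Q1 Q2 q1 qt; rewrite -e2; apply: IH => //; apply/triadic_itvP; rewrite e2.
have [c1|c1] := leP t ((3 * p + 1) ^+ 2).
  case: (IHsq (3 * p) (cantor_copy_mul3 P1) (cantor_copy_mul3 P2)) => [||hz|hz].
  - lra.
  - nra.
  - by left.
  - by right; left; right.
have [c2|c2] := leP t ((3 * p + 1) * (3 * p + 3)).
  by left; apply: (cantor_product_window P1 P2) => //; apply/triadic_itvP; rewrite -/t; nra.
have [c3|c3] := leP t ((3 * p + 2) ^+ 2).
  by right; left; left; apply/triadic_itvP; rewrite -/t; lra.
case: (IHsq (3 * p + 2) (cantor_copy_mul3D2 P1) (cantor_copy_mul3D2 P2)) => [||hz|hz].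
- lra.
- nra.
- by left.
- by right; right.
Qed.

Lemma measurable_diag_uncovered K m p : measurable (diag_uncovered K m p).
Proof.
elim: K m p => [|K IH] m p /=; first exact: measurable_triadic_itv.
by apply: measurableU; [apply: measurableU; [exact: measurable_triadic_itv|]|].
Qed.

(* [1/7] is the fixed point of [h |-> 1/9 + 2h/9]: one gap of relative
   length [1/9] plus two sub-squares at scale [1/9]. *)
Lemma diag_uncovered_measure K m p : 0 <= p ->
  (lebesgue_measure (diag_uncovered K m p) <=
   ((1 / 7 + 2 * (p + 1) * (2 / 3) ^+ K) / 3 ^+ m)%:E)%E.
Proof.
have e0 n : (0 : R) < (3 ^+ n)^-1 by rewrite invr_gt0 exprn_gt0.
elim: K m p => [|K IH] m p p0 /=.
  rewrite lebesgue_triadic_itv ?lee_fin ?ler_pM2r //; nra.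
have q0 : (0 : R) <= (2 / 3) ^+ K by rewrite exprn_ge0.
apply: le_trans (measureU2 _ _ _) _; [|exact: measurable_diag_uncovered|].
  by apply: measurableU; [exact: measurable_triadic_itv|exact: measurable_diag_uncovered].
apply: le_trans (leeD (measureU2 _ _ _) (lexx _)) _;
  [exact: measurable_triadic_itv|exact: measurable_diag_uncovered|].
apply: le_trans (leeD (leeD (lebesgue_triadic_itv_le _ _) (IH _ _ _)) (IH _ _ _)) _;
  [nra|nra|nra|].
rewrite -!EFinD lee_fin !div_expr3S -!mulrDl ler_pM2r // [_ ^+ K.+1]exprS; nra.
Qed.

(* [[0, 1/3^j]] is [[0, 1/3^(j+1)]], the gap [[3, 4]/3^(j+2)] and
   [[4, 9]/3^(j+2)], the square of the level interval [[2/3, 1]] at scales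
   [3^-(j+1)] and [3^-1]. *)
Fixpoint uncovered K N j : set R :=
  if N is N'.+1 then
    triadic_itv j.+2 3 4 `|` diag_uncovered K j.+2 2 `|` uncovered K N' j.+1
  else triadic_itv j 0 1.

Lemma measurable_uncovered K N j : measurable (uncovered K N j).
Proof.
elim: N j => [|N IH] j /=; first exact: measurable_triadic_itv.
apply: measurableU => //; apply: measurableU; first exact: measurable_triadic_itv.
exact: measurable_diag_uncovered.
Qed.

Lemma uncovered_measure K N j :
  (lebesgue_measure (uncovered K N j) <=
   ((1 / 3 ^+ N + 4 / 21 + (2 / 3) ^+ K) / 3 ^+ j)%:E)%E.
Proof.
have e0 n : (0 : R) < (3 ^+ n)^-1 by rewrite invr_gt0 exprn_gt0.
have q0 : (0 : R) <= (2 / 3) ^+ K by rewrite exprn_ge0.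
elim: N j => [|N IH] j /=.
  rewrite lebesgue_triadic_itv ?lee_fin ?ler_pM2r //; lra.
apply: le_trans (measureU2 _ _ _) _; [|exact: measurable_uncovered|].
  by apply: measurableU; [exact: measurable_triadic_itv|exact: measurable_diag_uncovered].
apply: le_trans (leeD (measureU2 _ _ _) (lexx _)) _;
  [exact: measurable_triadic_itv|exact: measurable_diag_uncovered|].
apply: le_trans (leeD (leeD (lebesgue_triadic_itv_le _ _) (diag_uncovered_measure _ _ _))
  (IH _)) _; [lra|lra|].
by rewrite -!EFinD lee_fin !div_expr3S -!mulrDl ler_pM2r //; lra.
Qed.

Lemma uncovered_cover K N j z :
  triadic_itv j 0 1 z -> @cantor_product_set R z \/ uncovered K N j z.
Proof.
elim: N j => [|N IH] j hz; first by right.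
move/triadic_itvP: hz; set t := z * 3 ^+ j.+2.
have -> : z * 3 ^+ j = t / 9 by rewrite /t !exprS; field.
move=> /andP[t0 t9].
have [c1|c1] := leP t 3.
  case: (IH j.+1) => [|hz|hz]; [|by left|by right; right].
  apply/triadic_itvP; rewrite (_ : z * _ = t / 3); first lra.
  by rewrite /t !exprS; field.
have [c2|c2] := leP t 4.
  by right; left; left; apply/triadic_itvP; rewrite -/t; lra.
have := @diag_image_cover K _ _ _ z (cantor_copy2 j) (cantor_copy2 0).
rewrite addn1 => -[||hz|hz]; [lra| |by left|by right; left; right].
by apply/triadic_itvP; rewrite -/t; lra.
Qed.

End Covering.

Lemma cantor_product_measure_ge (R : realType) K :
  ((17 / 21 - 2 * (2 / 3) ^+ K : R)%:E <= lebesgue_measure (@cantor_product_set R))%E.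
Proof.
have : (1%:E <= lebesgue_measure (@cantor_product_set R) +
                lebesgue_measure (uncovered K K 0))%E.
  have -> : 1%:E = ((1 - 0) / 3 ^+ 0 : R)%:E by rewrite subr0 expr0 divr1.
  rewrite -lebesgue_triadic_itv //.
  apply: le_trans _ (measureU2 _ _ _);
    [|exact: measurable_cantor_product_set|exact: measurable_uncovered].
  apply: le_measure; rewrite ?inE.
  - exact: measurable_triadic_itv.
  - by apply: measurableU; [exact: measurable_cantor_product_set|exact: measurable_uncovered].
  by move=> z /(uncovered_cover K K)[h|h]; [left|right].
move=> /le_trans/(_ (leeD (lexx _) (uncovered_measure R K K 0))); rewrite expr0 divr1 => h.
have -> : 17 / 21 - 2 * (2 / 3) ^+ K = 1 - (4 / 21 + 2 * (2 / 3) ^+ K) :> R by lra.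
rewrite EFinB leeBlDr //; apply: le_trans h (leeD (lexx _) _).
have : 1 / 3 ^+ K <= (2 / 3 : R) ^+ K.
  by rewrite expr_div_n ler_pM2r ?invr_gt0 ?exprn_gt0 // exprn_ege1 // ler1n.
by rewrite lee_fin; lra.
Qed.

Theorem theorem3p9 (R : realType) :
  measurable (@cantor_product_set R) /\
  ((17 / 21 : R)%:E <= lebesgue_measure (@cantor_product_set R))%E.
Proof.
split; first exact: measurable_cantor_product_set.
apply/lee_addgt0Pr => e e0.
have [K qK] : exists K, (2 / 3 : R) ^+ K < e / 2 by apply: exists_expr_lt; lra.
apply: le_trans (leeD (cantor_product_measure_ge R K) (lexx e%:E)).
by rewrite -EFinD lee_fin; lra.
Qed.
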